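(* Let $A$ be a symmetric general metric space, i.e. $A(x,y)=A(y,x)$ for all $x,y$. Then: (1) every flat filter on $A$ is Cauchy; (2) for every Cauchy filter $\mathcal F$, the maps $x\mapsto\lim^+_{y\in\mathcal F}A(x,y)$ and $x\mapsto\lim^+_{y\in\mathcal F}A(y,x)$ coincide; (3) every left adjoint left module on $A$ has the same underlying map as its right adjoint; (4) every $\mathcal P_2$-flat left module on $A$ is a left adjoint module; (5) a Cauchy filter on $A$ is closed if and only if it is a minimal Cauchy filter (minimal for inclusion among Cauchy filters); (6) the preorder of closed flat filters on $A$ ordered by reverse inclusion is discrete (no two distinct comparable elements).
   Context: A general metric space $A$ is a set with $A(-,-):A\times A\to[0,\infty]$, $A(x,x)=0$, $A(x,z)\le A(x,y)+A(y,z)$. Internal hom on $[0,\infty]$: $[x,y]=\max(y-x,0)$ for finite $x,y$, $[x,\infty]=\infty$ for $x<\infty$, $[\infty,y]=0$. A left module is $M:A\to[0,\infty]$ with $M(x)\le M(y)+A(x,y)$; a right module is $N$ with $N(y)\le A(x,y)+N(x)$. A left module $M$ is a left adjoint with right adjoint the right module $N$ iff $\inf_x(M(x)+N(x))=0$ and $M(x)+N(y)\ge A(x,y)$ for all $x,y$. $M$ is $\mathcal P_2$-flat iff (F2) for every finite (possibly empty) family $(N_i)$ of right modules, $\inf_x(M(x)+\max_iN_i(x))=\max_i\inf_x(M(x)+N_i(x))$ (empty max $=0$), and (F3) for all $v\in[0,\infty]$ and right modules $N$, $\inf_x(M(x)+[v,N(x)])=[v,\inf_x(M(x)+N(x))]$.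 A filter on $A$ is a nonempty set of nonempty subsets closed under finite intersections and supersets; $\lim^+_{\mathcal F}t=\inf_{f\in\mathcal F}\sup_{x\in f}t(x)$, $\lim^-_{\mathcal F}t=\sup_{f\in\mathcal F}\inf_{x\in f}t(x)$, $M^-(\mathcal F)(x)=\lim^-_{y\in\mathcal F}A(x,y)$. Cauchy: $\inf_{f}\sup_{x,y\in f}A(x,y)=0$. Weakly flat: $\lim^+_{\mathcal F}M^-(\mathcal F)=0$. Flat: for every $\epsilon>0$ there is $f\in\mathcal F$ such that for every finite family $x_1,\dots,x_n\in f$ and every $g\in\mathcal F$ there is $y\in g$ with $A(x_i,y)\le\epsilon$ for all $i$. A weakly flat filter $\mathcal F$ is closed iff for every $f\in\mathcal F$ there is $\epsilon>0$ with $\{x:M^-(\mathcal F)(x)\le\epsilon\}\subseteq f$. *)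

(* values in [0,oo] are modelled as nonnegative
   extended reals \bar R over an arbitrary R : realType. *)
From Stdlib Require Lists.List.
From HB Require Import structures.
From mathcomp Require Import all_boot all_order all_algebra.
From mathcomp Require Import all_classical all_reals ereal.
Set Implicit Arguments. Unset Strict Implicit. Unset Printing Implicit Defensive.
Import Order.TTheory GRing.Theory Num.Theory.
Local Open Scope classical_set_scope.
Local Open Scope ring_scope.
Local Open Scope ereal_scope.

Section GM.
Context {R : realType} {T : Type}.

Definition gm_gmetric (A : T -> T -> \bar R) : Prop :=
  [/\ (forall x y, 0 <= A x y),
      (forall x, A x x = 0) &
      (forall x y z, A x z <= A x y + A y z)].

Definition gm_ihom (x y : \bar R) : \bar R :=
  match x, y with
  | +oo, _ => 0
  | _, +oo => +oo
  | _, _ => maxe (y - x) 0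
  end.

Definition gm_einf (f : T -> \bar R) : \bar R := ereal_inf (range f).

Definition gm_left_module (A : T -> T -> \bar R) (M : T -> \bar R) : Prop :=
  (forall x, 0 <= M x) /\ (forall x y, M x <= M y + A x y).

Definition gm_right_module (A : T -> T -> \bar R) (N : T -> \bar R) : Prop :=
  (forall x, 0 <= N x) /\ (forall x y, N y <= A x y + N x).

Definition gm_adjoint_pair (A : T -> T -> \bar R) (M N : T -> \bar R) : Prop :=
  gm_einf (fun x => M x + N x) = 0 /\ (forall x y, A x y <= M x + N y).

Definition gm_left_adjoint (A : T -> T -> \bar R) (M : T -> \bar R) : Prop :=
  exists N, gm_right_module A N /\ gm_adjoint_pair A M N.

Definition gm_fmax (s : seq (\bar R)) : \bar R := foldr maxe 0 s.

Definition gm_P2_flat (A : T -> T -> \bar R) (M : T -> \bar R) : Prop :=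
  (forall Ns : seq (T -> \bar R), (forall N, Stdlib.Lists.List.In N Ns -> gm_right_module A N) ->
     gm_einf (fun x => M x + gm_fmax [seq N x | N <- Ns])
     = gm_fmax [seq gm_einf (fun x => M x + N x) | N <- Ns]) /\
  (forall (v : \bar R) (N : T -> \bar R), 0 <= v -> gm_right_module A N ->
     gm_einf (fun x => M x + gm_ihom v (N x)) = gm_ihom v (gm_einf (fun x => M x + N x))).

Definition gm_is_filter (F : set (set T)) : Prop :=
  [/\ F !=set0,
      (forall f, F f -> f !=set0),
      (forall f g, F f -> F g -> F (f `&` g)) &
      (forall f g, F f -> f `<=` g -> F g)].

Definition gm_limsupF (F : set (set T)) (t : T -> \bar R) : \bar R :=
  ereal_inf [set ereal_sup (t @` f) | f in F].

Definition gm_liminfF (F : set (set T)) (t : T -> \bar R) : \bar R :=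
  ereal_sup [set ereal_inf (t @` f) | f in F].

Definition gm_Mminus (A : T -> T -> \bar R) (F : set (set T)) (x : T) : \bar R :=
  gm_liminfF F (fun y => A x y).

Definition gm_cauchy (A : T -> T -> \bar R) (F : set (set T)) : Prop :=
  ereal_inf [set ereal_sup [set A p.1 p.2 | p in f `*` f] | f in F] = 0.

Definition gm_weakly_flat (A : T -> T -> \bar R) (F : set (set T)) : Prop :=
  gm_limsupF F (gm_Mminus A F) = 0.

Definition gm_flat (A : T -> T -> \bar R) (F : set (set T)) : Prop :=
  forall eps : R, (0 < eps)%R -> exists2 f, F f &
    forall xs : seq T, (forall x, Stdlib.Lists.List.In x xs -> f x) ->
    forall g, F g -> exists2 y, g y & forall x, Stdlib.Lists.List.In x xs -> A x y <= eps%:E.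

Definition gm_closed_filter (A : T -> T -> \bar R) (F : set (set T)) : Prop :=
  gm_weakly_flat A F /\
  forall f, F f -> exists2 eps : R, (0 < eps)%R &
    [set x | gm_Mminus A F x <= eps%:E] `<=` f.

Definition gm_minimal_cauchy (A : T -> T -> \bar R) (F : set (set T)) : Prop :=
  gm_is_filter F /\ gm_cauchy A F /\
  forall G, gm_is_filter G -> gm_cauchy A G -> G `<=` F -> G = F.

End GM.

From HB Require Import structures.
From mathcomp Require Import all_boot all_order all_algebra.
From mathcomp Require Import all_classical all_reals ereal.
From mathcomp Require Import lra.
Set Implicit Arguments. Unset Strict Implicit. Unset Printing Implicit Defensive.
Import Order.TTheory GRing.Theory Num.Theory.
Local Open Scope classical_set_scope.
Local Open Scope ring_scope.
Local Open Scope ereal_scope.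

(* Symmetry lets a module play both the left and the right role.  For an
   adjoint pair (M, N) the unit makes M y + N y small at some y, and the
   counit then gives M x <= M y + A y x <= M y + M y + N x, and dually, so
   M = N.  A P2-flat M has M itself as candidate right adjoint: (F2) for the
   empty family gives the unit, and (F2) for two truncated representables
   [M a, A a -] and [M b, A b -], whose infima against M vanish by (F3),
   produces points close to both a and b, whence the counit by the triangle
   inequality.  For filters, the sets {M^-(F) <= eps} generate a filter that
   is contained in every Cauchy filter G included in F and, by symmetry, is itself
   Cauchy; a Cauchy filter is therefore minimal exactly when it contains this
   filter, which is what closedness says. *)

Section ExtendedNonnegative.
Variable R : realType.

Lemma ge0_le_eps_eq0 (x : \bar R) :
  0 <= x -> (forall e : R, (0 < e)%R -> x <= e%:E) -> x = 0.
Proof.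
move=> x0 xe; apply: le_anti; rewrite x0 andbT.
by apply/lee_addgt0Pr => e e0; rewrite add0e xe.
Qed.

Lemma ihomEFin (r s : R) : gm_ihom r%:E s%:E = (Num.max (s - r) 0)%:E.
Proof. by rewrite /= EFin_max. Qed.

Lemma ihomNy (r : R) : gm_ihom r%:E -oo = 0.
Proof. by rewrite /= max_r // leNye. Qed.

Lemma ihomxx (r : R) : gm_ihom r%:E r%:E = 0.
Proof. by rewrite ihomEFin subrr maxxx. Qed.

Lemma ihom_ge0 (r : R) y : 0 <= gm_ihom r%:E y.
Proof.
case: y => [s| |]; last by rewrite ihomNy.
  by rewrite ihomEFin lee_fin le_max lexx orbT.
exact: leey.
Qed.

Lemma ihom_leD (r : R) y z c : 0 <= c -> y <= c + z ->
  gm_ihom r%:E y <= c + gm_ihom r%:E z.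
Proof.
case: c => [c| |] c0 //.
- case: z => [t| |].
  + case: y => [s| |] ysz; last by rewrite ihomNy adde_ge0 // ihom_ge0.
      rewrite !ihomEFin -EFinD lee_fin ge_max; rewrite -EFinD lee_fin in ysz.
      rewrite lee_fin in c0.
      have : (t - r <= Num.max (t - r) 0)%R by rewrite le_max lexx.
      have : (0 <= Num.max (t - r) 0)%R by rewrite le_max lexx orbT.
      by move=> ? ?; apply/andP; split; lra.
    by move: ysz; rewrite leye_eq.
  + by move=> _; rewrite /= addey // leey.
  + by rewrite addeNy leeNy_eq => /eqP ->; rewrite ihomNy adde0.
- by move=> _; rewrite addye ?leey // gt_eqF // (lt_le_trans _ (ihom_ge0 r z)).
Qed.

Lemma ihom_lt_leD (r e : R) y : gm_ihom r%:E y < e%:E -> y <= (r + e)%:E.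
Proof.
case: y => [s| |] //; last by rewrite leNye.
by rewrite ihomEFin lte_fin lee_fin gt_max => /andP[? _]; lra.
Qed.

End ExtendedNonnegative.

Section Infimum.
Variables (R : realType) (T : Type).
Implicit Types f : T -> \bar R.

Lemma gm_einf_eq0P f : (forall x, 0 <= f x) ->
  gm_einf f = 0 <-> forall e : R, (0 < e)%R -> exists x, f x < e%:E.
Proof.
move=> f0; split=> [f_inf e e0|small].
  have /ereal_inf_lt[_ [x _ <-] ?] : gm_einf f < e%:E by rewrite f_inf lte_fin.
  by exists x.
apply: ge0_le_eps_eq0 => [|e e0].
  by apply: le_ereal_inf_tmp => _ [x _ <-].
have [x fxe] := small e e0.
by apply: ge_ereal_inf; exists (f x); [exists x | exact: ltW].
Qed.

End Infimum.

Section GeneralMetric.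
Variables (R : realType) (T : Type) (A : T -> T -> \bar R).
Hypothesis hA : gm_gmetric A.

Lemma metric_ge0 x y : 0 <= A x y. Proof. by case: hA. Qed.
Lemma metricxx x : A x x = 0. Proof. by case: hA. Qed.
Lemma metric_triangle x y z : A x z <= A x y + A y z. Proof. by case: hA. Qed.

Lemma dist_right_module a : gm_right_module A (A a).
Proof. by split=> [x|x y]; [exact: metric_ge0 | rewrite addeC; exact: metric_triangle]. Qed.

Lemma ihom_right_module (r : R) N : gm_right_module A N ->
  gm_right_module A (fun x => gm_ihom r%:E (N x)).
Proof.
move=> [_ hN]; split=> [x|x y]; first exact: ihom_ge0.
by apply: ihom_leD; [exact: metric_ge0 | exact: hN].
Qed.

Lemma left_module_einf_dist M a :
  gm_left_module A M -> gm_einf (fun x => M x + A a x) = M a.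
Proof.
move=> [_ hM]; apply: le_anti; apply/andP; split.
  by apply: ge_ereal_inf; exists (M a + A a a); [exists a | rewrite metricxx adde0].
by apply: le_ereal_inf_tmp => _ [x _ <-]; exact: hM.
Qed.

Section P2Flat.
Variable M : T -> \bar R.
Hypotheses (hM : gm_left_module A M) (flatM : gm_P2_flat A M).

Lemma P2_flat_unit : gm_einf (fun x => M x + M x) = 0.
Proof.
have [M0 _] := hM; have [F2 _] := flatM.
have := F2 [::] (fun N (h : List.In N [::]) => match h with end); rewrite /=.
move=> /(gm_einf_eq0P (fun x => adde_ge0 (M0 x) (lexx 0))) small.
apply/gm_einf_eq0P => [x|e e0]; first exact: adde_ge0.
have [x Mx] := small _ (divr_gt0 e0 (ltr0Sn _ 1)); rewrite adde0 in Mx.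
by exists x; rewrite (splitr e) EFinD lteD.
Qed.

Lemma P2_flat_common_near a b (ma mb : R) : M a = ma%:E -> M b = mb%:E ->
  forall e : R, (0 < e)%R ->
  exists x, A a x <= (ma + e)%:E /\ A b x <= (mb + e)%:E.
Proof.
have [M0 _] := hM; have [F2 F3] := flatM.
move=> Ma Mb e e0.
pose Na x := gm_ihom ma%:E (A a x); pose Nb x := gm_ihom mb%:E (A b x).
have rmN N : List.In N [:: Na; Nb] -> gm_right_module A N.
  by move=> /= [<-|[<-|[]]]; apply: ihom_right_module; exact: dist_right_module.
have einf_ihom c m : M c = m%:E -> gm_einf (fun x => M x + gm_ihom m%:E (A c x)) = 0.
  move=> Mc; rewrite F3 ?left_module_einf_dist ?Mc ?ihomxx //.
    by rewrite -Mc.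
  exact: dist_right_module.
have maxN0 x : 0 <= M x + gm_fmax [seq N x | N <- [:: Na; Nb]].
  by rewrite adde_ge0 //= le_max ihom_ge0.
have := F2 _ rmN; rewrite [RHS]/= !einf_ihom // !maxxx.
move=> /(gm_einf_eq0P maxN0)/(_ e e0) [x /= NaNb].
have [Nax Nbx] : Na x < e%:E /\ Nb x < e%:E.
  by split; apply: le_lt_trans NaNb; apply: le_trans (leeDr _ (M0 x));
    rewrite /= !le_max lexx ?orbT.
by exists x; split; apply: ihom_lt_leD.
Qed.

End P2Flat.

Lemma cauchy_small_set F : gm_cauchy A F -> forall e : R, (0 < e)%R ->
  exists2 f, F f & forall x y, f x -> f y -> A x y <= e%:E.
Proof.
rewrite /gm_cauchy => cF e e0.
have : ereal_inf [set ereal_sup [set A p.1 p.2 | p in f `*` f] | f in F] < e%:E.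
  by rewrite cF lte_fin.
move=> /ereal_inf_lt [_ [f Ff <-]] diam; exists f => // x y fx fy.
by apply: le_trans (ltW diam); apply: ereal_sup_ubound; exists (x, y).
Qed.

Lemma small_sets_cauchy F : gm_is_filter F ->
  (forall e : R, (0 < e)%R -> exists2 f, F f & forall x y, f x -> f y -> A x y <= e%:E) ->
  gm_cauchy A F.
Proof.
move=> [_ Fn0 _ _] small; apply: ge0_le_eps_eq0 => [|e e0].
  apply: le_ereal_inf_tmp => _ [f Ff <-]; have [x fx] := Fn0 f Ff.
  apply: le_ereal_sup_tmp; exists (A x x); first by exists (x, x).
  exact: metric_ge0.
have [f Ff fe] := small e e0.
apply: ge_ereal_inf; exists (ereal_sup [set A p.1 p.2 | p in f `*` f]); first by exists f.
by apply: ge_ereal_sup => _ [[x y] [/= fx fy] <-]; exact: fe.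
Qed.

Lemma Mminus_ge0 F x : gm_is_filter F -> 0 <= gm_Mminus A F x.
Proof.
move=> [[g Fg] _ _ _]; apply: le_ereal_sup_tmp.
exists (ereal_inf ((fun y => A x y) @` g)); first by exists g.
by apply: le_ereal_inf_tmp => _ [y _ <-]; exact: metric_ge0.
Qed.

Lemma Mminus_le F f x e : gm_is_filter F -> F f -> f x ->
  (forall y, f y -> A x y <= e) -> gm_Mminus A F x <= e.
Proof.
move=> [_ Fn0 FI _] Ff fx fe; apply: ge_ereal_sup => _ [g Fg <-].
have [y [gy fy]] := Fn0 _ (FI _ _ Fg Ff).
by apply: ge_ereal_inf; exists (A x y); [exists y | exact: fe].
Qed.

Lemma Mminus_le_near F g x (e d : R) : F g -> gm_Mminus A F x <= e%:E ->
  (0 < d)%R -> exists2 y, g y & A x y < (e + d)%:E.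
Proof.
move=> Fg xe d0.
have : ereal_inf ((fun y => A x y) @` g) < (e + d)%:E.
  apply: (@le_lt_trans _ _ e%:E); last by rewrite lte_fin; lra.
  by apply: le_trans xe; apply: ereal_sup_ubound; exists g.
by move=> /ereal_inf_lt [_ [y gy <-]] ?; exists y.
Qed.

Lemma cauchy_weakly_flat F : gm_is_filter F -> gm_cauchy A F -> gm_weakly_flat A F.
Proof.
move=> hF cF; have [_ Fn0 _ _] := hF; apply: ge0_le_eps_eq0 => [|e e0].
  apply: le_ereal_inf_tmp => _ [f Ff <-]; have [x fx] := Fn0 f Ff.
  apply: le_ereal_sup_tmp; exists (gm_Mminus A F x); first by exists x.
  exact: Mminus_ge0.
have [f Ff fe] := cauchy_small_set cF e0.
apply: ge_ereal_inf; exists (ereal_sup (gm_Mminus A F @` f)); first by exists f.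
by apply: ge_ereal_sup => _ [x fx <-]; exact: (Mminus_le hF Ff fx (fe x ^~ fx)).
Qed.

Definition Mminus_nbhs F : set (set T) := fun S =>
  exists2 e : R, (0 < e)%R & [set x | gm_Mminus A F x <= e%:E] `<=` S.

Lemma Mminus_nbhs_sub F G : gm_is_filter F -> gm_is_filter G -> gm_cauchy A G ->
  G `<=` F -> Mminus_nbhs F `<=` G.
Proof.
move=> hF [_ _ _ Gsup] cG GF S [e e0 eS].
have [g Gg ge] := cauchy_small_set cG e0.
apply: Gsup (Gg) _ => x gx; apply: eS.
exact: Mminus_le hF (GF _ Gg) gx (ge x ^~ gx).
Qed.

Lemma Mminus_nbhs_filter F : gm_is_filter F -> gm_cauchy A F ->
  gm_is_filter (Mminus_nbhs F).
Proof.
move=> hF cF; have [_ Fn0 _ _] := hF.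
have sub_F := Mminus_nbhs_sub hF hF cF (@subset_refl _ F).
split.
- by exists setT; exists 1%R.
- by move=> S /sub_F /Fn0.
- move=> S1 S2 [e1 e10 h1] [e2 e20 h2]; exists (Num.min e1 e2).
    by rewrite lt_min e10 e20.
  by move=> x xe; split; [apply: h1 | apply: h2];
    apply: le_trans xe _; rewrite lee_fin ge_min lexx ?orbT.
- by move=> S1 S2 [e e0 eS1] S12; exists e => //; exact: subset_trans S12.
Qed.

Section Symmetric.
Hypothesis hsym : forall x y, A x y = A y x.

Lemma left_right_module_sym M : gm_left_module A M <-> gm_right_module A M.
Proof.
by split=> -[M0 hM]; split=> // x y; [rewrite addeC hsym | rewrite addeC -hsym]; exact: hM.
Qed.

Lemma adjoint_pair_sym M N : gm_adjoint_pair A M N -> gm_adjoint_pair A N M.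
Proof.
move=> [unit counit]; split=> [|x y].
  by rewrite -unit; congr gm_einf; apply: funext => x; rewrite addeC.
by rewrite hsym addeC; exact: counit.
Qed.

Lemma adjoint_pair_le M N x : gm_left_module A M -> gm_right_module A N ->
  gm_adjoint_pair A M N -> M x <= N x.
Proof.
move=> [M0 hM] [N0 _] [unit counit]; apply/lee_addgt0Pr => e e0.
have M0N0 y : 0 <= M y + N y by rewrite adde_ge0.
have [y hy] := (gm_einf_eq0P M0N0).1 unit _ (divr_gt0 e0 (ltr0Sn _ 1)).
have My : M y <= (e / 2)%:E by apply: le_trans (ltW hy); rewrite leeDl.
apply: le_trans (hM x y) _; rewrite hsym.
apply: le_trans (leeD2l _ (counit y x)) _.
by rewrite addeA addeC (splitr e) EFinD; apply: leeD2l; exact: leeD.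
Qed.

Lemma adjoint_pair_eq M N : gm_left_module A M -> gm_right_module A N ->
  gm_adjoint_pair A M N -> M = N.
Proof.
move=> lM rN MN; apply: funext => x; apply: le_anti.
rewrite adjoint_pair_le //= adjoint_pair_le //; last exact: adjoint_pair_sym.
  exact/left_right_module_sym.
exact/left_right_module_sym.
Qed.

Lemma P2_flat_counit M a b : gm_left_module A M -> gm_P2_flat A M ->
  A a b <= M a + M b.
Proof.
move=> lM flatM; have [M0 _] := lM.
case Ma : (M a) => [ma| |]; last by have := M0 a; rewrite Ma.
- case Mb : (M b) => [mb| |]; last by have := M0 b; rewrite Mb.
  + apply/lee_addgt0Pr => e e0.
    have [x [ax bx]] := P2_flat_common_near lM flatM Ma Mb (divr_gt0 e0 (ltr0Sn _ 1)).
    apply: le_trans (metric_triangle a x b) _; rewrite (hsym x b).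
    by apply: le_trans (leeD ax bx) _; rewrite -!EFinD lee_fin; lra.
  + by rewrite addey // leey.
- by rewrite addye ?leey //; case: (M b) (M0 b).
Qed.

Lemma P2_flat_left_adjoint M : gm_left_module A M -> gm_P2_flat A M ->
  gm_left_adjoint A M.
Proof.
move=> lM flatM; exists M; split; first exact/left_right_module_sym.
by split=> [|a b]; [exact: P2_flat_unit | exact: P2_flat_counit].
Qed.

Lemma flat_cauchy F : gm_is_filter F -> gm_flat A F -> gm_cauchy A F.
Proof.
move=> hF flatF; apply: small_sets_cauchy => // e e0.
have [f Ff hf] := flatF _ (divr_gt0 e0 (ltr0Sn _ 1)); exists f => // x y fx fy.
have xy_f w : List.In w [:: x; y] -> f w by move=> /= [<-|[<-|[]]].
have [z _ hz] := hf _ xy_f f Ff.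
apply: le_trans (metric_triangle x z y) _.
by rewrite (hsym z y) (splitr e) EFinD; apply: leeD; apply: hz => /=; auto.
Qed.

Lemma Mminus_nbhs_cauchy F : gm_is_filter F -> gm_cauchy A F ->
  gm_cauchy A (Mminus_nbhs F).
Proof.
move=> hF cF; apply: small_sets_cauchy; first exact: Mminus_nbhs_filter.
move=> e e0; set d := (e / 8)%R; have d0 : (0 < d)%R by rewrite divr_gt0.
have [g Fg gd] := cauchy_small_set cF d0.
exists [set x | gm_Mminus A F x <= d%:E]; first by exists d.
move=> x x' xd x'd.
have [y gy xy] := Mminus_le_near Fg xd d0.
have [y' gy' x'y'] := Mminus_le_near Fg x'd d0.
apply: le_trans (metric_triangle x y x') _.
apply: le_trans (leeD2l _ (metric_triangle y y' x')) _; rewrite (hsym y' x').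
apply: le_trans (leeD (ltW xy) (leeD (gd y y' gy gy') (ltW x'y'))) _.
by rewrite -!EFinD lee_fin /d; lra.
Qed.

Lemma closed_filter_minimal_cauchy F : gm_is_filter F -> gm_cauchy A F ->
  gm_closed_filter A F <-> gm_minimal_cauchy A F.
Proof.
move=> hF cF; split=> [[_ Fcl]|[_ [_ Fmin]]].
  do 2!split=> //; move=> G hG cG GF; apply/seteqP; split=> // f Ff.
  by apply: (Mminus_nbhs_sub hF hG cG GF); have [e e0 ?] := Fcl f Ff; exists e.
have NF : Mminus_nbhs F = F.
  apply: Fmin; [exact: Mminus_nbhs_filter | exact: Mminus_nbhs_cauchy |].
  exact: (Mminus_nbhs_sub hF hF cF (@subset_refl _ F)).
split; first exact: cauchy_weakly_flat.
move=> f Ff; have [e e0 ?] : Mminus_nbhs F f by rewrite NF.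
by exists e.
Qed.

End Symmetric.
End GeneralMetric.

Theorem mainTheorem17 (R : realType) (T : Type) (A : T -> T -> \bar R)
  (hA : gm_gmetric A) (hsym : forall x y, A x y = A y x) :
  (* (1) *)
  (forall F, gm_is_filter F -> gm_flat A F -> gm_cauchy A F) /\
  (* (2) *)
  (forall F, gm_is_filter F -> gm_cauchy A F ->
     (fun x => gm_limsupF F (fun y => A x y)) = (fun x => gm_limsupF F (fun y => A y x))) /\
  (* (3) *)
  (forall M N, gm_left_module A M -> gm_right_module A N -> gm_adjoint_pair A M N ->
     M = N) /\
  (* (4) *)
  (forall M, gm_left_module A M -> gm_P2_flat A M -> gm_left_adjoint A M) /\
  (* (5) *)
  (forall F, gm_is_filter F -> gm_cauchy A F ->
     (gm_closed_filter A F <-> gm_minimal_cauchy A F)) /\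
  (* (6) *)
  (forall F G, gm_is_filter F -> gm_flat A F -> gm_closed_filter A F ->
     gm_is_filter G -> gm_flat A G -> gm_closed_filter A G ->
     G `<=` F -> G = F).
Proof.
split; first exact: flat_cauchy.
split.
  move=> F _ _; apply: funext => x; congr gm_limsupF; apply: funext => y.
  exact: hsym.
split; first exact: adjoint_pair_eq.
split; first exact: P2_flat_left_adjoint.
split; first exact: closed_filter_minimal_cauchy.
move=> F G hF flatF clF hG flatG _ GF.
have cF := flat_cauchy hA hsym hF flatF.
have [_ [_ Fmin]] := (closed_filter_minimal_cauchy hA hsym hF cF).1 clF.
exact: Fmin G hG (flat_cauchy hA hsym hG flatG) GF.
Qed.
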